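(* Let $Q$ be a Moufang loop and $X$ a $2$-divisible normal subloop of $Q$ that is a commutative group. Then every inner mapping of $Q$ restricts to an automorphism of $X$.
   Context: A loop is a magma with identity $1$ in which the left translations $L_x(y)=xy$ and right translations $R_x(y)=yx$ are bijections; it is Moufang if it satisfies $xy\cdot zx=(x\cdot yz)x$. A subloop is normal if it is the kernel of a homomorphism. The inner mapping group $\mathrm{Inn}(Q)$ is the stabilizer of $1$ in the permutation group generated by all $L_x,R_x$; its elements are inner mappings. $X$ is $2$-divisible if $x\mapsto x^2$ is surjective on $X$. *)

From mathcomp Require Import ssreflect ssrfun ssrbool.

Set Implicit Arguments.
Unset Strict Implicit.
Unset Printing Implicit Defensive.

Section Loops.
Variables (T : Type) (mul : T -> T -> T) (one : T).

Definition Ltr (x : T) : T -> T := fun y => mul x y.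
Definition Rtr (x : T) : T -> T := fun y => mul y x.

Definition is_loop : Prop :=
  [/\ forall x, mul one x = x,
      forall x, mul x one = x,
      forall x, bijective (Ltr x)
    & forall x, bijective (Rtr x)].

Definition moufang : Prop :=
  forall x y z, mul (mul x y) (mul z x) = mul (mul x (mul y z)) x.

(* The multiplication group Mlt(Q): the permutation group generated by all
   L_x and R_x, i.e. all finite composites of translations and their inverses. *)
Inductive in_Mlt : (T -> T) -> Prop :=
| Mlt_id : in_Mlt id
| Mlt_L x f : in_Mlt f -> in_Mlt (Ltr x \o f)
| Mlt_R x f : in_Mlt f -> in_Mlt (Rtr x \o f)
| Mlt_Linv x g f : cancel (Ltr x) g -> cancel g (Ltr x) ->
                   in_Mlt f -> in_Mlt (g \o f)
| Mlt_Rinv x g f : cancel (Rtr x) g -> cancel g (Rtr x) ->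
                   in_Mlt f -> in_Mlt (g \o f).

Definition inner_mapping (f : T -> T) : Prop := in_Mlt f /\ f one = one.

Definition loop_hom (T' : Type) (mul' : T' -> T' -> T') (h : T -> T') : Prop :=
  forall x y, h (mul x y) = mul' (h x) (h y).

Definition commutative_group_on (X : T -> Prop) : Prop :=
  (forall x y z, X x -> X y -> X z -> mul (mul x y) z = mul x (mul y z)) /\
  (forall x y, X x -> X y -> mul x y = mul y x).

Definition two_divisible (X : T -> Prop) : Prop :=
  forall x, X x -> exists y, X y /\ mul y y = x.

Definition restricts_to_aut (X : T -> Prop) (f : T -> T) : Prop :=
  [/\ forall x, X x -> X (f x),
      forall x y, X x -> X y -> f x = f y -> x = y,
      forall y, X y -> exists x, X x /\ f x = y
    & forall x y, X x -> X y -> f (mul x y) = mul (f x) (f y)].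

End Loops.

Definition normal_subloop (T : Type) (mul : T -> T -> T) (X : T -> Prop) : Prop :=
  exists (T' : Type) (mul' : T' -> T' -> T') (one' : T') (h : T -> T'),
    is_loop mul' one' /\ loop_hom mul mul' h /\
    forall x, X x <-> h x = one'.

From mathcomp Require Import ssreflect ssrfun ssrbool.

(* Every element g of the multiplication group of a Moufang loop is the first
   component of an autotopism (g, B, C): for the generators L_x, R_x this is a
   Moufang identity, their inverses are L_(x^-1), R_(x^-1) by the inverse
   property, and autotopisms compose.  If moreover g 1 = 1, then
   B = C = R_c g with c = B 1, so g is a pseudo-automorphism with companion c,
   and the left Moufang identity turns this into the semi-automorphism law
   g(a(ba)) = (g a g b) g a.  On the 2-divisible commutative group X, writing
   a = x^2 gives g(ab) = g(x(bx)) = g x g b g x = g(x^2) g b.  Finally X is a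
   class of the kernel congruence, which every translation, hence every
   g in Mlt(Q), respects; so g with g 1 = 1 maps X onto X. *)

Set Implicit Arguments.
Unset Strict Implicit.
Unset Printing Implicit Defensive.

Section Loop.

Variables (T : Type) (mul : T -> T -> T) (one : T).
Hypothesis loopQ : is_loop mul one.

Local Notation "x * y" := (mul x y).

Lemma mul1q x : one * x = x.
Proof. by case: loopQ. Qed.

Lemma mulq1 x : x * one = x.
Proof. by case: loopQ. Qed.

Lemma mulqI : right_injective mul.
Proof. by case: loopQ => _ _ bijL _ x; apply: bij_inj (bijL x). Qed.

Lemma mulIq : left_injective mul.
Proof. by case: loopQ => _ _ _ bijR x; apply: bij_inj (bijR x). Qed.

Lemma exists_rinv x : exists xi, x * xi = one.
Proof.
case: loopQ => _ _ bijL _; case: (bijL x) => g _ gK.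
by exists (g one); apply: gK.
Qed.

Lemma Mlt_bijective g : in_Mlt mul g -> bijective g.
Proof.
case: loopQ => _ _ bijL bijR.
elim=> [|x f _ bf|x f _ bf|x h f hK Kh _ bf|x h f hK Kh _ bf].
- by exists id.
- exact: bij_comp (bijL x) bf.
- exact: bij_comp (bijR x) bf.
- exact: bij_comp (Bijective Kh hK) bf.
- exact: bij_comp (Bijective Kh hK) bf.
Qed.

Definition translation_invariant (E : T -> T -> Prop) : Prop :=
  forall x y z, (E y z <-> E (x * y) (x * z)) /\ (E y z <-> E (y * x) (z * x)).

Lemma Mlt_invariant E g : translation_invariant E -> in_Mlt mul g ->
  forall y z, E y z <-> E (g y) (g z).
Proof.
move=> invE.
elim=> [|x f _ IH|x f _ IH|x h f _ Kh _ IH|x h f _ Kh _ IH] y z //=.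
- exact: iff_trans (IH y z) (invE x _ _).1.
- exact: iff_trans (IH y z) (invE x _ _).2.
- apply: iff_trans (IH y z) _; have := (invE x (h (f y)) (h (f z))).1.
  by rewrite /Ltr in Kh; rewrite !Kh; exact: iff_sym.
- apply: iff_trans (IH y z) _; have := (invE x (h (f y)) (h (f z))).2.
  by rewrite /Rtr in Kh; rewrite !Kh; exact: iff_sym.
Qed.

Definition autotopic (A : T -> T) : Prop :=
  exists B C : T -> T, forall a b, A a * B b = C (a * b).

Lemma eq_autotopic A1 A2 : A1 =1 A2 -> autotopic A1 -> autotopic A2.
Proof. by move=> eqA [B [C atpA]]; exists B, C => a b; rewrite -eqA. Qed.

Definition pseudo_aut (f : T -> T) (c : T) : Prop :=
  forall a b, f a * (f b * c) = f (a * b) * c.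

Definition semi_morph (f : T -> T) : Prop :=
  forall a b, f (a * (b * a)) = (f a * f b) * f a.

Lemma pseudo_aut_of_autotopic f : autotopic f -> f one = one ->
  exists c, pseudo_aut f c.
Proof.
move=> [B [C atp]] f1; exists (B one) => a b.
have BC u : B u = C u by have := atp one u; rewrite f1 !mul1q.
have CfB u : C u = f u * B one by have := atp u one; rewrite mulq1.
by rewrite -!CfB -[C b]BC atp.
Qed.

Section Moufang.

Hypothesis moufangQ : moufang mul.

Lemma moufang_flexible x z : x * (z * x) = (x * z) * x.
Proof. by have := moufangQ x one z; rewrite mulq1 mul1q. Qed.

Section Inverse.

Variables x xi : T.
Hypothesis xxi : x * xi = one.

Lemma mulKVq z : x * (xi * z) = z.
Proof. by apply: (@mulIq x); have := moufangQ x xi z; rewrite xxi mul1q. Qed.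

Lemma rinv_linv : xi * x = one.
Proof. by apply: (@mulqI x); rewrite mulKVq mulq1. Qed.

Lemma mulqKV z : (z * xi) * x = z.
Proof.
apply: (@mulqI x); have := moufangQ x z xi.
by rewrite rinv_linv mulq1 -moufang_flexible.
Qed.

Lemma Ltr_inv_eq g : cancel g (Ltr mul x) -> g =1 Ltr mul xi.
Proof. by move=> Kg y; apply: (@mulqI x); rewrite [_ (g y)]Kg /Ltr mulKVq. Qed.

Lemma Rtr_inv_eq g : cancel g (Rtr mul x) -> g =1 Rtr mul xi.
Proof. by move=> Kg y; apply: (@mulIq x); rewrite [_ x]Kg /Rtr mulqKV. Qed.

End Inverse.

Lemma mulKq x xi z : x * xi = one -> xi * (x * z) = z.
Proof. by move/rinv_linv/mulKVq. Qed.

Lemma mulqK x xi z : x * xi = one -> (z * x) * xi = z.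
Proof. by move/rinv_linv/mulqKV. Qed.

Lemma rinv_mul b bi x xi u : b * bi = one -> x * xi = one ->
  (b * x) * u = one -> u = xi * bi.
Proof.
move=> bbi xxi bxu; have ub : u * b = xi by rewrite -{1}(mulqK b xxi) mulKq.
by rewrite -ub mulqK.
Qed.

Lemma moufangL_autotopism x xi c d : x * xi = one ->
  ((x * c) * x) * (xi * d) = x * (c * d).
Proof.
move=> xxi; have [di ddi] := exists_rinv d.
have [w dixw] := exists_rinv (di * x).
rewrite -(rinv_mul (rinv_linv ddi) xxi dixw).
have := moufangQ x (c * d) di; rewrite (mulqK _ ddi) => <-.
exact: mulqK dixw.
Qed.

Lemma moufangL x c e : x * (c * (x * e)) = ((x * c) * x) * e.
Proof.
have [xi xxi] := exists_rinv x.
by rewrite -(moufangL_autotopism c (x * e) xxi) (mulKq _ xxi).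
Qed.

Lemma moufangR_autotopism x xi a b : x * xi = one ->
  (a * x) * (xi * (b * xi)) = (a * b) * xi.
Proof.
move=> xxi; have := moufangL_autotopism (xi * a) (b * xi) xxi.
by rewrite (mulKVq xxi) => ->; rewrite moufangQ -moufang_flexible mulKVq.
Qed.

Lemma autotopic_L x f : autotopic f -> autotopic (Ltr mul x \o f).
Proof.
move=> [B [C atp]]; exists (fun b => B b * x), (fun t => (x * C t) * x) => a b.
by rewrite /= /Ltr moufangQ atp.
Qed.

Lemma autotopic_R x f : autotopic f -> autotopic (Rtr mul x \o f).
Proof.
move=> [B [C atp]]; have [xi xxi] := exists_rinv x.
exists (fun b => xi * (B b * xi)), (fun t => C t * xi) => a b.
by rewrite /= /Rtr moufangR_autotopism // atp.
Qed.

Lemma Mlt_autotopic g : in_Mlt mul g -> autotopic g.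
Proof.
elim=> [|x f _|x f _|x h f _ Kh _ atpf|x h f _ Kh _ atpf].
- by exists id, id.
- exact: autotopic_L.
- exact: autotopic_R.
- have [xi xxi] := exists_rinv x.
  apply: eq_autotopic (autotopic_L xi atpf) => y.
  by rewrite /= (Ltr_inv_eq xxi Kh).
- have [xi xxi] := exists_rinv x.
  apply: eq_autotopic (autotopic_R xi atpf) => y.
  by rewrite /= (Rtr_inv_eq xxi Kh).
Qed.

Lemma pseudo_aut_semi_morph f c : pseudo_aut f c -> semi_morph f.
Proof. by move=> pf a b; apply: (@mulIq c); rewrite -!pf -moufangL. Qed.

End Moufang.

Lemma semi_morph_restricts X f :
    commutative_group_on mul X -> two_divisible mul X -> bijective f ->
    (forall x, X x <-> X (f x)) -> f one = one -> semi_morph f ->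
  restricts_to_aut mul X f.
Proof.
move=> [assoc comm] divX [g fK gK] fX f1 semi.
have fsq x : f (x * x) = f x * f x.
  by have := semi x one; rewrite mul1q f1 mulq1.
split.
- by move=> x /fX.
- by move=> x y _ _ /(can_inj fK).
- by move=> y Xy; exists (g y); split; [apply/fX; rewrite gK | apply: gK].
- move=> _ b /divX [x [Xx <-]] Xb.
  have Xfx := (fX x).1 Xx; have Xfb := (fX b).1 Xb.
  have -> : (x * x) * b = x * (b * x) by rewrite (comm b x) // assoc.
  by rewrite semi fsq assoc // [f b * f x]comm // -assoc.
Qed.

End Loop.

Lemma kernel_translation_invariant (T T' : Type) (mul : T -> T -> T)
    (mul' : T' -> T' -> T') (one' : T') (h : T -> T') :
  is_loop mul' one' -> loop_hom mul mul' h ->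
  translation_invariant mul (fun y z => h y = h z).
Proof.
move=> loop' hom x y z; rewrite /= !hom.
by split; [split=> [->|/(mulqI loop')] | split=> [->|/(mulIq loop')]].
Qed.

Lemma Mlt_stabilizes_normal_subloop (T : Type) (mul : T -> T -> T) (one : T)
    (X : T -> Prop) g :
  is_loop mul one -> normal_subloop mul X -> in_Mlt mul g -> g one = one ->
  forall x, X x <-> X (g x).
Proof.
move=> loopQ [T' [mul' [one' [h [loop' [hom kerX]]]]]] Mg g1 x.
have h1 : h one = one'.
  by apply: (mulqI loop' (y:=h one)); rewrite -hom (mulq1 loopQ) (mulq1 loop').
apply: iff_trans (kerX x) (iff_trans _ (iff_sym (kerX (g x)))).
rewrite -h1 -{2}g1.
exact: Mlt_invariant (kernel_translation_invariant loop' hom) Mg x one.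
Qed.

Theorem lemma4p2 (T : Type) (mul : T -> T -> T) (one : T) (X : T -> Prop) :
  is_loop mul one -> moufang mul ->
  normal_subloop mul X -> commutative_group_on mul X -> two_divisible mul X ->
  forall f : T -> T, inner_mapping mul one f -> restricts_to_aut mul X f.
Proof.
move=> loopQ moufangQ normalX groupX divX f [Mf f1].
have [c pseudo_f] :=
  pseudo_aut_of_autotopic loopQ (Mlt_autotopic loopQ moufangQ Mf) f1.
have stab_f := Mlt_stabilizes_normal_subloop loopQ normalX Mf f1.
have semi_f := pseudo_aut_semi_morph loopQ moufangQ pseudo_f.
exact: (semi_morph_restricts loopQ groupX divX (Mlt_bijective loopQ Mf)
          stab_f f1 semi_f).
Qed.
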